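(* For $a\in(0,1)$ and $x\in[0,1]$ define $$I(a,x):=-\int_0^{\pi}\operatorname{Im}\Bigl\{w_{a,x}(t)\Bigr\}\,\frac{dt}{\sqrt{a+1/a-2\cos t}},$$ where, with $z=e^{it}$, $w_{a,x}(t)=z^{1/4}\left(\frac{1-az}{z-a}\right)^{1/4}\left(\frac{z+x}{xz+1}\right)^{1/2}$, each root being the continuous branch along $t\in[0,\pi]$ taking the value $1$ at $t=0$. Let $\alpha\in(0,1)$ be the unique zero of $a\mapsto I(a,0)$ in $(0,1)$, and for each $a\in(0,\alpha)$ let $x_a\in(0,1)$ be the unique value of $x$ with $I(a,x_a)=0$. Then $\lim_{a\to0}x_a=1$.
   Context: It is established (independently of this statement) that $I(a,x)$ is increasing in $x$, that $a\mapsto I(a,0)$ has exactly one zero $\alpha$ in $(0,1)$, and that for each $a\in(0,\alpha)$ there is a unique $x_a\in(0,1)$ with $I(a,x_a)=0$. *)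

From Stdlib Require Import Reals.
From Coquelicot Require Import Coquelicot.
Open Scope R_scope.

(* Principal argument of a nonzero complex number, with values in (-PI, PI]. *)
Definition Arg (w : C) : R :=
  if Rle_dec 0 (Im w) then acos (Re w / Cmod w) else - acos (Re w / Cmod w).

Definition zt (t : R) : C := (cos t, sin t).

(* Continuous phase along t in [0,PI] (value 0 at t = 0) of
     z^{1/4} ((1-az)/(z-a))^{1/4} ((z+x)/(xz+1))^{1/2},
   written out factor by factor:
   - z^{1/4} = e^{it/4};
   - ((1-az)/(z-a))^{1/4} = e^{i (Arg(1-az) - Arg(z-a))/4}  (unimodular ratio;
     Re(1-az) > 0 and Im(z-a) = sin t >= 0, so this phase is continuous, 0 at t=0);
   - ((z+x)/(xz+1))^{1/2} = e^{i (Arg(z+x) - Arg(xz+1))/2}  (unimodular ratio;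
     Im(z+x) = sin t >= 0 and Re(xz+1) > 0 for x < 1). *)
Definition phase (a x t : R) : R :=
  let z := zt t in
  t / 4
  + (Arg (Cminus 1 (Cmult (RtoC a) z)) - Arg (Cminus z (RtoC a))) / 4
  + (Arg (Cplus z (RtoC x)) - Arg (Cplus (Cmult (RtoC x) z) 1)) / 2.

Definition w (a x t : R) : C := (cos (phase a x t), sin (phase a x t)).

Definition I (a x : R) : R :=
  - RInt (fun t => Im (w a x t) / sqrt (a + / a - 2 * cos t)) 0 PI.

From Stdlib Require Import Reals Lra Psatz.
From Coquelicot Require Import Coquelicot.
Open Scope R_scope.

(* Along [0, PI], with z = e^{it}, the phase of w_{a,x} is
   t/2 - arg (1 + x z) - arg (1 - a conj z) / 2, both arguments lying in [0, PI/2).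
   Comparing tangents at the half angle t/2 shows that this phase lies in (0, PI)
   as soon as 4a < (1 - x)(1 - a); then Im w > 0 on (0, PI) and I(a, x) < 0.
   So every zero x_a < 1 of I(a, .) satisfies (1 - x_a)(1 - a) <= 4a, which forces
   x_a -> 1. *)

Lemma Cmod_polar r th : 0 <= r -> Cmod (r * cos th, r * sin th) = r.
Proof.
  intros Hr. unfold Cmod, Re, Im; cbn [fst snd].
  replace ((r * cos th) ^ 2 + (r * sin th) ^ 2) with (r ^ 2)
    by (pose proof (sin2_cos2 th) as E; unfold Rsqr in E; nra).
  now apply sqrt_pow2.
Qed.

Lemma sin_nonneg_range th : - PI < th < 2 * PI -> 0 <= sin th -> 0 <= th <= PI.
Proof.
  intros Hth Hs. split.
  - destruct (Rle_or_lt 0 th) as [|Hneg]; [assumption|].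
    assert (0 < sin (- th)) by (apply sin_gt_0; lra).
    rewrite sin_neg in *. lra.
  - destruct (Rle_or_lt th PI) as [|Hgt]; [assumption|].
    assert (0 < sin (th - PI)) by (apply sin_gt_0; lra).
    rewrite sin_minus, sin_PI, cos_PI in *. lra.
Qed.

Lemma Arg_polar r th : 0 < r -> - PI < th < 2 * PI -> 0 <= sin th ->
  Arg (r * cos th, r * sin th) = th.
Proof.
  intros Hr Hth Hs. pose proof (sin_nonneg_range th Hth Hs) as Hrange.
  unfold Arg; simpl. rewrite Cmod_polar by lra.
  destruct (Rle_dec 0 (r * sin th)) as [_|Hneg]; [|nra].
  replace (r * cos th / r) with (cos th) by (field; lra).
  now apply acos_cos.
Qed.

Lemma acos_Re_div_Cmod w : 0 < Re w -> acos (Re w / Cmod w) = atan (Rabs (Im w) / Re w).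
Proof.
  intros Hp. change (Cmod w) with (sqrt (Re w ^ 2 + Im w ^ 2)).
  set (p := Re w) in *. set (q := Im w).
  assert (HM2 : sqrt (p ^ 2 + q ^ 2) ^ 2 = p ^ 2 + q ^ 2) by (rewrite pow2_sqrt; nra).
  set (M := sqrt (p ^ 2 + q ^ 2)) in *.
  assert (HM : 0 < M) by (unfold M; apply sqrt_lt_R0; nra).
  rewrite acos_atan by (apply Rdiv_lt_0_compat; lra).
  f_equal.
  assert (Hq : Rabs q * Rabs q = q * q) by (rewrite <- Rabs_mult; apply Rabs_right; nra).
  replace (1 - (p / M)²) with ((Rabs q / M)²).
  2: { unfold Rsqr. replace (Rabs q / M * (Rabs q / M)) with (q * q / (M * M))
         by (rewrite <- Hq; field; lra).
       replace (q * q) with (M * M - p * p) by nra. field. lra. }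
  rewrite sqrt_Rsqr by (apply Rdiv_le_0_compat; [apply Rabs_pos | lra]).
  field. lra.
Qed.

Lemma Arg_atan w : 0 < Re w -> Arg w = atan (Im w / Re w).
Proof.
  intros Hp. unfold Arg. rewrite acos_Re_div_Cmod by assumption.
  destruct (Rle_dec 0 (Im w)).
  - now rewrite Rabs_right by lra.
  - rewrite Rabs_left by lra. rewrite <- atan_opp. f_equal. field. lra.
Qed.

Lemma cos_sin_atan_div q p : 0 < p ->
  cos (atan (q / p)) = p / sqrt (p ^ 2 + q ^ 2) /\
  sin (atan (q / p)) = q / sqrt (p ^ 2 + q ^ 2).
Proof.
  intros Hp. rewrite cos_atan, sin_atan.
  assert (HM : 0 < sqrt (p ^ 2 + q ^ 2)) by (apply sqrt_lt_R0; nra).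
  replace (sqrt (1 + (q / p)²)) with (sqrt (p ^ 2 + q ^ 2) / p).
  - split; field; lra.
  - rewrite <- (sqrt_Rsqr p) at 2 by lra. rewrite <- sqrt_div_alt by (unfold Rsqr; nra).
    f_equal. unfold Rsqr. field. lra.
Qed.

Lemma Cpolar_Arg w : 0 < Re w -> w = (Cmod w * cos (Arg w), Cmod w * sin (Arg w)).
Proof.
  intros Hp. rewrite Arg_atan by assumption.
  destruct (cos_sin_atan_div (Im w) (Re w) Hp) as [-> ->].
  unfold Cmod. assert (0 < sqrt (Re w ^ 2 + Im w ^ 2)) by (apply sqrt_lt_R0; nra).
  destruct w as [p q]; simpl in *. f_equal; field; lra.
Qed.

Lemma Arg_zt_mul t u : 0 <= t <= PI -> 0 < Re u -> 0 <= Im (Cmult (zt t) u) ->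
  Arg (Cmult (zt t) u) = t + Arg u.
Proof.
  intros Ht Hu Him.
  assert (Hr : 0 < Cmod u).
  { apply Cmod_gt_0. intros ->. simpl in Hu. lra. }
  assert (Hphi : - PI / 2 < Arg u < PI / 2)
    by (rewrite Arg_atan by assumption; apply atan_bound).
  assert (E : Cmult (zt t) u = (Cmod u * cos (t + Arg u), Cmod u * sin (t + Arg u))).
  { rewrite (Cpolar_Arg u) at 1 by assumption.
    unfold zt, Cmult; simpl. rewrite cos_plus, sin_plus. f_equal; ring. }
  rewrite E in *. simpl in Him.
  apply Arg_polar; [assumption | lra | nra].
Qed.

Lemma one_sub_mul_cos_pos a th : -1 < a < 1 -> 0 < 1 - a * cos th.
Proof. intros Ha. pose proof (COS_bound th). destruct (Rle_or_lt 0 a); nra. Qed.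

Section PhaseFactors.

Variable t : R.
Hypothesis Ht : 0 <= t <= PI.

Let c := cos t.
Let s := sin t.

Lemma zt_sub_RtoC a :
  Cminus (zt t) (RtoC a) = Cmult (zt t) (1 - a * c, a * s).
Proof.
  pose proof (sin2_cos2 t) as E. unfold Rsqr in E.
  unfold zt, Cminus, Cplus, Copp, Cmult, RtoC, c, s; simpl. f_equal; [|ring].
  transitivity (cos t - a * (sin t * sin t + cos t * cos t)); [rewrite E|]; ring.
Qed.

Lemma Arg_one_sub a : -1 < a < 1 ->
  Arg (Cminus 1 (Cmult (RtoC a) (zt t))) = - atan (a * s / (1 - a * c)).
Proof.
  intros Ha. pose proof (one_sub_mul_cos_pos a t Ha).
  rewrite Arg_atan; unfold zt, Cminus, Cplus, Copp, Cmult, RtoC, c, s; simpl.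
  - rewrite <- atan_opp. f_equal. field. lra.
  - lra.
Qed.

Lemma Arg_zt_sub a : -1 < a < 1 ->
  Arg (Cminus (zt t) (RtoC a)) = t + atan (a * s / (1 - a * c)).
Proof.
  intros Ha. pose proof (one_sub_mul_cos_pos a t Ha).
  assert (Hs : 0 <= s) by (apply sin_ge_0; lra).
  rewrite zt_sub_RtoC, Arg_zt_mul, Arg_atan; try (simpl; unfold c; lra).
  rewrite <- zt_sub_RtoC. unfold zt, Cminus, Cplus, Copp, RtoC; simpl. fold s. lra.
Qed.

End PhaseFactors.

Lemma phase_eq a x t : -1 < a < 1 -> -1 < x < 1 -> 0 <= t <= PI ->
  phase a x t =
  t / 2 - atan (x * sin t / (1 + x * cos t)) - atan (a * sin t / (1 - a * cos t)) / 2.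
Proof.
  intros Ha Hx Ht. pose proof (one_sub_mul_cos_pos (- x) t ltac:(lra)).
  unfold phase.
  replace (Cplus (zt t) (RtoC x)) with (Cminus (zt t) (RtoC (- x)))
    by (unfold Cminus, Cplus, Copp, RtoC; simpl; f_equal; ring).
  replace (Cplus (Cmult (RtoC x) (zt t)) 1) with (Cminus 1 (Cmult (RtoC (- x)) (zt t)))
    by (unfold Cminus, Cplus, Copp, Cmult, RtoC; simpl; f_equal; ring).
  rewrite !Arg_one_sub, !Arg_zt_sub by lra.
  replace (- x * sin t / (1 - - x * cos t)) with (- (x * sin t / (1 + x * cos t)))
    by (field; lra).
  rewrite atan_opp. field.
Qed.

Lemma tan_sub_atan th v : 0 < cos th + sin th * v ->
  tan (th - atan v) = (sin th - cos th * v) / (cos th + sin th * v).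
Proof.
  intros Hd. assert (Hr : 0 < sqrt (1 + v²)) by (apply sqrt_lt_R0; unfold Rsqr; nra).
  unfold tan. rewrite sin_minus, cos_minus, cos_atan, sin_atan.
  field. lra.
Qed.

Lemma tan_half_angle_gap a x S C s c :
  0 < a -> 0 <= x < 1 -> 4 * a < (1 - x) * (1 - a) ->
  0 < S -> 0 < C -> S * S + C * C = 1 -> s = 2 * S * C -> c = C * C - S * S ->
  x * s / (1 + x * c) < (S * (1 - a * c) - C * (a * s)) / (C * (1 - a * c) + S * (a * s)).
Proof.
  intros Ha Hx Hax HS HC HSC -> ->.
  set (Q := 1 - a * (C * C - S * S)).
  set (P := 1 + x * (C * C - S * S)).
  set (D := C * Q + S * (a * (2 * S * C))).
  assert (Ha1 : a < 1) by nra.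
  assert (HQ : 1 - a <= Q) by (unfold Q; nra).
  assert (HP : 0 < P) by (unfold P; nra).
  assert (HD : 0 < D).
  { unfold D. assert (0 < C * Q) by (apply Rmult_lt_0_compat; lra).
    assert (0 <= S * (a * (2 * S * C))) by (repeat apply Rmult_le_pos; lra). lra. }
  assert (Hkey : 0 < Q * (1 - x) - 2 * a * (C * C) * (1 + x)).
  { assert ((1 - a) * (1 - x) <= Q * (1 - x)) by nra.
    assert (C * C * (1 + x) <= 2) by nra.
    nra. }
  assert (Hnum : (S * Q - C * (a * (2 * S * C))) * P - x * (2 * S * C) * D
                 = S * (Q * (1 - x) - 2 * a * (C * C) * (1 + x))).
  { unfold P, D.
    transitivity (S * (Q * (1 - x) - 2 * a * (C * C) * (1 + x))
                  - (S * S + C * C - 1) * x * S * (Q + 2 * a * (C * C))); [ring|].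
    rewrite HSC. ring. }
  apply Rlt_0_minus.
  replace ((S * Q - C * (a * (2 * S * C))) / D - x * (2 * S * C) / P)
    with (S * (Q * (1 - x) - 2 * a * (C * C) * (1 + x)) / (P * D))
    by (rewrite <- Hnum; field; lra).
  apply Rdiv_lt_0_compat; apply Rmult_lt_0_compat; lra.
Qed.

Lemma atan_nonneg v : 0 <= v -> 0 <= atan v.
Proof.
  intros Hv. rewrite <- atan_0. destruct (Req_dec v 0) as [->|Hv0]; [lra|].
  left. apply atan_increasing. lra.
Qed.

Lemma atan_sum_lt_half_angle a x t :
  0 < a -> 0 <= x < 1 -> 4 * a < (1 - x) * (1 - a) -> 0 < t < PI ->
  atan (x * sin t / (1 + x * cos t)) + atan (a * sin t / (1 - a * cos t)) < t / 2.
Proof.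
  intros Ha Hx Hax Ht.
  assert (HQ : 0 < 1 - a * cos t) by (apply one_sub_mul_cos_pos; nra).
  assert (Hs : 0 < sin t) by (apply sin_gt_0; lra).
  set (v := a * sin t / (1 - a * cos t)).
  assert (Hv : 0 <= v) by (apply Rdiv_le_0_compat; nra).
  assert (Hphi : 0 <= atan v < PI / 2).
  { split; [now apply atan_nonneg | pose proof (atan_bound v); lra]. }
  set (th := t / 2).
  assert (HS : 0 < sin th) by (apply sin_gt_0; unfold th; lra).
  assert (HC : 0 < cos th) by (apply cos_gt_0; unfold th; lra).
  assert (Hsin : sin t = 2 * sin th * cos th) by (rewrite <- sin_2a; f_equal; unfold th; field).
  assert (Hcos : cos t = cos th * cos th - sin th * sin th)
    by (rewrite <- cos_2a; f_equal; unfold th; field).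
  assert (HSC : sin th * sin th + cos th * cos th = 1)
    by (pose proof (sin2_cos2 th); unfold Rsqr in *; lra).
  enough (atan (x * sin t / (1 + x * cos t)) < th - atan v) by lra.
  rewrite <- (atan_tan (th - atan v)) by (unfold th; lra).
  apply atan_increasing.
  assert (HD : 0 < cos th * (1 - a * cos t) + sin th * (a * sin t)).
  { assert (0 < cos th * (1 - a * cos t)) by (apply Rmult_lt_0_compat; lra).
    assert (0 < sin th * (a * sin t)) by (apply Rmult_lt_0_compat; nra).
    lra. }
  assert (Ev : cos th + sin th * v
               = (cos th * (1 - a * cos t) + sin th * (a * sin t)) / (1 - a * cos t))
    by (unfold v; field; lra).
  rewrite tan_sub_atan by (rewrite Ev; apply Rdiv_lt_0_compat; lra).
  replace ((sin th - cos th * v) / (cos th + sin th * v))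
    with ((sin th * (1 - a * cos t) - cos th * (a * sin t))
          / (cos th * (1 - a * cos t) + sin th * (a * sin t)))
    by (rewrite Ev; unfold v; field; lra).
  apply tan_half_angle_gap with (S := sin th) (C := cos th); assumption.
Qed.

Lemma phase_bounds a x t :
  0 < a -> 0 <= x < 1 -> 4 * a < (1 - x) * (1 - a) -> 0 < t < PI ->
  0 < phase a x t < PI.
Proof.
  intros Ha Hx Hax Ht.
  assert (Ha1 : a < 1) by nra.
  assert (Hs : 0 < sin t) by (apply sin_gt_0; lra).
  pose proof (one_sub_mul_cos_pos a t ltac:(lra)).
  pose proof (one_sub_mul_cos_pos (- x) t ltac:(lra)).
  pose proof (atan_nonneg (x * sin t / (1 + x * cos t)) ltac:(apply Rdiv_le_0_compat; nra)).
  pose proof (atan_nonneg (a * sin t / (1 - a * cos t)) ltac:(apply Rdiv_le_0_compat; nra)).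
  pose proof (atan_sum_lt_half_angle a x t Ha Hx Hax Ht).
  rewrite phase_eq by lra. lra.
Qed.

Lemma I_lt_0 a x : 0 < a -> 0 <= x < 1 -> 4 * a < (1 - x) * (1 - a) -> I a x < 0.
Proof.
  intros Ha Hx Hax. unfold I.
  assert (Ha1 : a < 1) by nra.
  assert (Hden : forall t, 0 < a + / a - 2 * cos t).
  { intros t. pose proof (COS_bound t).
    assert (a * / a = 1) by (field; lra).
    assert (0 < / a) by (apply Rinv_0_lt_compat; lra). nra. }
  set (G t := sin (t / 2 - atan (x * sin t / (1 + x * cos t))
                   - atan (a * sin t / (1 - a * cos t)) / 2) / sqrt (a + / a - 2 * cos t)).
  rewrite (RInt_ext _ G).
  2: { intros t Ht. rewrite Rmin_left, Rmax_right in Ht by (pose proof PI_RGT_0; lra).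
       unfold w, G, Im; simpl. rewrite phase_eq by lra. reflexivity. }
  enough (0 < RInt G 0 PI) by lra.
  apply RInt_gt_0; [apply PI_RGT_0 | |].
  - intros t Ht. unfold G. apply Rdiv_lt_0_compat; [|now apply sqrt_lt_R0].
    rewrite <- phase_eq by lra. apply sin_gt_0; apply phase_bounds; lra.
  - intros t Ht. apply (ex_derive_continuous G).
    unfold G. auto_derive. pose proof (COS_bound t). pose proof (Hden t).
    repeat split; try nra.
    apply Rgt_not_eq, sqrt_lt_R0. lra.
Qed.

Lemma I_root_bound a x : 0 < a -> 0 <= x < 1 -> I a x = 0 -> (1 - x) * (1 - a) <= 4 * a.
Proof.
  intros Ha Hx HI. destruct (Rle_or_lt ((1 - x) * (1 - a)) (4 * a)) as [|Hlt]; [assumption|].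
  pose proof (I_lt_0 a x Ha Hx Hlt). lra.
Qed.

Theorem lemma6p1 (alpha : R) (xa : R -> R) :
  0 < alpha < 1 ->
  I alpha 0 = 0 ->
  (forall b, 0 < b < 1 -> I b 0 = 0 -> b = alpha) ->
  (forall a, 0 < a < alpha ->
     0 < xa a < 1 /\ I a (xa a) = 0 /\
     (forall y, 0 < y < 1 -> I a y = 0 -> y = xa a)) ->
  filterlim xa (at_right 0) (locally 1).
Proof.
  intros Halpha _ _ Hxa.
  apply filterlim_locally. intros eps. pose proof (cond_pos eps) as He.
  assert (Hd : 0 < Rmin alpha (eps / (4 + eps)))
    by (apply Rmin_pos; [lra | apply Rdiv_lt_0_compat; lra]).
  exists (mkposreal _ Hd). intros a Ha Ha0.
  change (Rabs (a - 0) < Rmin alpha (eps / (4 + eps))) in Ha.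
  rewrite Rminus_0_r, Rabs_right in Ha by lra.
  pose proof (Rmin_l alpha (eps / (4 + eps))).
  pose proof (Rmin_r alpha (eps / (4 + eps))).
  assert (Hsmall : a * (4 + eps) < eps).
  { replace (pos eps) with (eps / (4 + eps) * (4 + eps)) at 2 by (field; lra).
    apply Rmult_lt_compat_r; lra. }
  destruct (Hxa a ltac:(lra)) as [Hx [HI _]].
  pose proof (I_root_bound a (xa a) Ha0 ltac:(lra) HI).
  change (Rabs (xa a - 1) < eps).
  rewrite Rabs_left by lra. nra.
Qed.
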